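(* Let $\mathcal C$ be a monoidal category admitting reflexive coequalizers, whose monoidal product preserves reflexive coequalizers in the left (resp. right) variable. Let $T$ and $P$ be left (resp. right) Hopf monads on $\mathcal C$ which preserve reflexive coequalizers. Then every morphism of bimonads $f\colon T\to P$ is cross quotientable, and the cross quotient $P\div_f T$ is a left (resp. right) Hopf monad on $\mathcal C^T$.
   Context: Monoidal categories are strict. A bimonad is a monad $(T,\mu,\eta)$ with a comonoidal structure $T_2(X,Y)\colon T(X\otimes Y)\to TX\otimes TY$, $T_0\colon T\mathbb 1\to\mathbb 1$ such that $\mu,\eta$ are comonoidal; a bimonad morphism is a monad morphism that is a comonoidal natural transformation. $\mathcal C^T$ is the monoidal category of $T$-modules ($(M,r)\otimes(N,s)=(M\otimes N,(r\otimes s)T_2(M,N))$). A morphism of monads $f\colon T\to P$ induces $f^*\colon\mathcal C^P\to\mathcal C^T$, $(M,r)\mapsto(M,rf_M)$ (strict monoidal if $f$ is a bimonad morphism). $f$ is cross quotientable if $f^*$ is monadic (has a left adjoint and the comparison functor to modules over the induced monad is an equivalence); the cross quotient $P\div_f T$ is then the monad of $f^*$ on $\mathcal C^T$, which is a bimonad. A reflexive pair is a pair of parallel morphisms with a common section; a reflexive coequalizer is a coequalizer of such. Left (resp. right) Hopf monad: $H^l_{X,Y}=(TX\otimes\mu_Y)T_2(X,TY)$ (resp. $H^r_{X,Y}=(\mu_X\otimes TY)T_2(TX,Y)$) invertible for all $X,Y$. *)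

From Stdlib Require Import ProofIrrelevance.

Record Cat := {
  ob :> Type;
  hom : ob -> ob -> Type;
  idm : forall A, hom A A;
  cmp : forall A B C, hom B C -> hom A B -> hom A C;
  cmp_idl : forall A B (f : hom A B), cmp A B B (idm B) f = f;
  cmp_idr : forall A B (f : hom A B), cmp A A B f (idm A) = f;
  cmp_assoc : forall A B C D (f : hom A B) (g : hom B C) (h : hom C D),
      cmp A C D h (cmp A B C g f) = cmp A B D (cmp B C D h g) f }.
Arguments idm {c} A.
Arguments cmp {c A B C} g f.
Arguments cmp_idl {c A B} f.
Arguments cmp_idr {c A B} f.
Arguments cmp_assoc {c A B C D} f g h.
Notation "g ∘ f" := (cmp g f) (at level 40, left associativity).

Definition is_iso (C : Cat) (A B : C) (f : hom C A B) : Prop :=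
  exists g : hom C B A, g ∘ f = idm A /\ f ∘ g = idm B.
Arguments is_iso {C A B} f.

Definition castH {O : Type} (H : O -> O -> Type) {A A' B B' : O}
  (e1 : A = A') (e2 : B = B') (f : H A B) : H A' B' :=
  match e1 in _ = A0 return H A0 B' with
  | eq_refl => match e2 in _ = B0 return H A B0 with eq_refl => f end end.

Record Functor (C D : Cat) := {
  fo :> C -> D;
  fm : forall A B, hom C A B -> hom D (fo A) (fo B);
  fm_id : forall A, fm A A (idm A) = idm (fo A);
  fm_cmp : forall A B E (f : hom C A B) (g : hom C B E),
      fm A E (g ∘ f) = fm B E g ∘ fm A B f }.
Arguments fo {C D} f0 _ : rename.
Arguments fm {C D} f0 {A B} _ : rename.

Definition Fid (C : Cat) : Functor C C.
Proof.
  refine {| fo := fun X => X; fm := fun A B h => h |}; reflexivity.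
Defined.

Definition Fcomp (C D E : Cat) (F : Functor C D) (G : Functor D E) : Functor C E.
Proof.
  refine {| fo := fun X => G (F X); fm := fun A B h => fm G (fm F h) |}.
  - intros A. rewrite !fm_id. reflexivity.
  - intros A B E' f g. rewrite !fm_cmp. reflexivity.
Defined.

Definition NatIso (C D : Cat) (F G : Functor C D) : Prop :=
  exists a : forall X, hom D (F X) (G X),
    (forall X, is_iso (a X)) /\
    (forall X Y (h : hom C X Y), fm G h ∘ a X = a Y ∘ fm F h).

Arguments NatIso {C D} F G.

Arguments Fcomp {C D E} F G.

Definition IsEquivalence (C D : Cat) (K : Functor C D) : Prop :=
  exists G : Functor D C, NatIso (Fcomp K G) (Fid C) /\ NatIso (Fcomp G K) (Fid D).
Arguments IsEquivalence {C D} K.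

Record SMCat := {
  smcat :> Cat;
  tens : smcat -> smcat -> smcat;
  tensm : forall A B C D, hom smcat A B -> hom smcat C D ->
          hom smcat (tens A C) (tens B D);
  unit_ob : smcat;
  tensm_id : forall A C, tensm A A C C (idm A) (idm C) = idm (tens A C);
  tensm_cmp : forall A B E A' B' E' (f : hom smcat A B) (g : hom smcat B E)
      (f' : hom smcat A' B') (g' : hom smcat B' E'),
      tensm A E A' E' (g ∘ f) (g' ∘ f') = tensm B E B' E' g g' ∘ tensm A B A' B' f f';
  tens_assoc : forall A B C, tens (tens A B) C = tens A (tens B C);
  tens_unit_l : forall A, tens unit_ob A = A;
  tens_unit_r : forall A, tens A unit_ob = A;
  tensm_assoc : forall A A' B B' C C' (f : hom smcat A A') (g : hom smcat B B')
      (h : hom smcat C C'),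
      castH (hom smcat) (tens_assoc A B C) (tens_assoc A' B' C')
        (tensm _ _ _ _ (tensm _ _ _ _ f g) h)
      = tensm _ _ _ _ f (tensm _ _ _ _ g h);
  tensm_unit_l : forall A B (f : hom smcat A B),
      castH (hom smcat) (tens_unit_l A) (tens_unit_l B)
        (tensm _ _ _ _ (idm unit_ob) f) = f;
  tensm_unit_r : forall A B (f : hom smcat A B),
      castH (hom smcat) (tens_unit_r A) (tens_unit_r B)
        (tensm _ _ _ _ f (idm unit_ob)) = f }.
Arguments tens {s} A B.
Arguments tensm {s A B C D} f g.
Arguments unit_ob {s}.
Arguments tens_assoc {s} A B C.
Arguments tens_unit_l {s} A.
Arguments tens_unit_r {s} A.
Notation "A ⊗ B" := (tens A B) (at level 35, right associativity).
Notation "f ⊗m g" := (tensm f g) (at level 35, right associativity).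
Notation "'𝟙'" := unit_ob.

Record Monad (C : Cat) := {
  mob :> C -> C;
  mmap : forall A B, hom C A B -> hom C (mob A) (mob B);
  mmap_id : forall A, mmap A A (idm A) = idm (mob A);
  mmap_cmp : forall A B E (f : hom C A B) (g : hom C B E),
      mmap A E (g ∘ f) = mmap B E g ∘ mmap A B f;
  mu : forall A, hom C (mob (mob A)) (mob A);
  eta : forall A, hom C A (mob A);
  mu_nat : forall A B (f : hom C A B),
      mmap A B f ∘ mu A = mu B ∘ mmap _ _ (mmap A B f);
  eta_nat : forall A B (f : hom C A B), mmap A B f ∘ eta A = eta B ∘ f;
  mu_assoc : forall A, mu A ∘ mmap _ _ (mu A) = mu A ∘ mu (mob A);
  mu_eta_l : forall A, mu A ∘ eta (mob A) = idm (mob A);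
  mu_eta_r : forall A, mu A ∘ mmap _ _ (eta A) = idm (mob A) }.
Arguments mob {C} m _.
Arguments mmap {C} m {A B} f.
Arguments mu {C} m A.
Arguments eta {C} m A.

Record Bimonad (C : SMCat) := {
  bmon :> Monad C;
  T2 : forall X Y : C, hom C (bmon (X ⊗ Y)) (bmon X ⊗ bmon Y);
  T0 : hom C (bmon 𝟙) 𝟙;
  T2_nat : forall X X' Y Y' (f : hom C X X') (g : hom C Y Y'),
      T2 X' Y' ∘ mmap bmon (f ⊗m g) = (mmap bmon f ⊗m mmap bmon g) ∘ T2 X Y;
  T2_coassoc : forall X Y Z : C,
      (T2 X Y ⊗m idm (bmon Z)) ∘ T2 (X ⊗ Y) Z
      = castH (hom C) (f_equal (mob bmon) (eq_sym (tens_assoc X Y Z)))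
          (eq_sym (tens_assoc (bmon X) (bmon Y) (bmon Z)))
          ((idm (bmon X) ⊗m T2 Y Z) ∘ T2 X (Y ⊗ Z));
  T0_counit_l : forall X : C,
      castH (hom C) (f_equal (mob bmon) (tens_unit_l X)) (tens_unit_l (bmon X))
        ((T0 ⊗m idm (bmon X)) ∘ T2 𝟙 X) = idm (bmon X);
  T0_counit_r : forall X : C,
      castH (hom C) (f_equal (mob bmon) (tens_unit_r X)) (tens_unit_r (bmon X))
        ((idm (bmon X) ⊗m T0) ∘ T2 X 𝟙) = idm (bmon X);
  mu_T2 : forall X Y : C,
      T2 X Y ∘ mu bmon (X ⊗ Y)
      = (mu bmon X ⊗m mu bmon Y) ∘ T2 (bmon X) (bmon Y) ∘ mmap bmon (T2 X Y);
  mu_T0 : T0 ∘ mu bmon 𝟙 = T0 ∘ mmap bmon T0;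
  eta_T2 : forall X Y : C, T2 X Y ∘ eta bmon (X ⊗ Y) = eta bmon X ⊗m eta bmon Y;
  eta_T0 : T0 ∘ eta bmon 𝟙 = idm 𝟙 }.
Arguments Bimonad C : clear implicits.
Arguments bmon {C} b.
Arguments T2 {C} b X Y.
Arguments T0 {C} b.

Record BimonadMor (C : SMCat) (T P : Bimonad C) := {
  bmor :> forall X : C, hom C (T X) (P X);
  bmor_nat : forall X Y (h : hom C X Y), mmap P h ∘ bmor X = bmor Y ∘ mmap T h;
  bmor_mu : forall X, bmor X ∘ mu T X = mu P X ∘ mmap P (bmor X) ∘ bmor (T X);
  bmor_eta : forall X, bmor X ∘ eta T X = eta P X;
  bmor_T2 : forall X Y, T2 P X Y ∘ bmor (X ⊗ Y) = (bmor X ⊗m bmor Y) ∘ T2 T X Y;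
  bmor_T0 : T0 P ∘ bmor 𝟙 = T0 T }.
Arguments BimonadMor {C} T P.
Arguments bmor {C T P} b X.

Definition leftHopf (C : SMCat) (T : Bimonad C) : Prop :=
  forall X Y : C, is_iso ((idm (T X) ⊗m mu T Y) ∘ T2 T X (T Y)).
Definition rightHopf (C : SMCat) (T : Bimonad C) : Prop :=
  forall X Y : C, is_iso ((mu T X ⊗m idm (T Y)) ∘ T2 T (T X) Y).

Definition reflexive_pair (C : Cat) (A B : C) (f g : hom C A B) : Prop :=
  exists s : hom C B A, f ∘ s = idm B /\ g ∘ s = idm B.
Arguments reflexive_pair {C A B} f g.

Definition is_coequalizer (C : Cat) (A B Q : C) (f g : hom C A B) (q : hom C B Q)
  : Prop :=
  q ∘ f = q ∘ g /\
  forall (Z : C) (h : hom C B Z), h ∘ f = h ∘ g -> exists! u : hom C Q Z, u ∘ q = h.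
Arguments is_coequalizer {C A B Q} f g q.

Definition has_reflexive_coequalizers (C : Cat) : Prop :=
  forall (A B : C) (f g : hom C A B), reflexive_pair f g ->
    exists (Q : C) (q : hom C B Q), is_coequalizer f g q.

Definition tensor_preserves_rc_left (C : SMCat) : Prop :=
  forall (A B Q : C) (f g : hom C A B) (q : hom C B Q) (X : C),
    reflexive_pair f g -> is_coequalizer f g q ->
    is_coequalizer (f ⊗m idm X) (g ⊗m idm X) (q ⊗m idm X).

Definition tensor_preserves_rc_right (C : SMCat) : Prop :=
  forall (A B Q : C) (f g : hom C A B) (q : hom C B Q) (X : C),
    reflexive_pair f g -> is_coequalizer f g q ->
    is_coequalizer (idm X ⊗m f) (idm X ⊗m g) (idm X ⊗m q).

Definition monad_preserves_rc (C : Cat) (T : Monad C) : Prop :=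
  forall (A B Q : C) (f g : hom C A B) (q : hom C B Q),
    reflexive_pair f g -> is_coequalizer f g q ->
    is_coequalizer (mmap T f) (mmap T g) (mmap T q).

Record Alg (C : Cat) (T : Monad C) := {
  carrier : C;
  act : hom C (T carrier) carrier;
  act_eta : act ∘ eta T carrier = idm carrier;
  act_mu : act ∘ mmap T act = act ∘ mu T carrier }.
Arguments Alg {C} T.
Arguments carrier {C T} _.
Arguments act {C T} _.

Definition AlgHom (C : Cat) (T : Monad C) (M N : Alg T) : Type :=
  { h : hom C (carrier M) (carrier N) | act N ∘ mmap T h = h ∘ act M }.
Arguments AlgHom {C T} M N.

Lemma sig_ext {A : Type} {P : A -> Prop} (x y : sig P) :
  proj1_sig x = proj1_sig y -> x = y.
Proof.
  destruct x as [x px], y as [y py]; simpl; intros e; subst y.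
  f_equal; apply proof_irrelevance.
Qed.

Definition alg_id (C : Cat) (T : Monad C) (M : Alg T) : AlgHom M M.
Proof.
  exists (idm (carrier M)). rewrite mmap_id, cmp_idr, cmp_idl. reflexivity.
Defined.

Definition alg_cmp (C : Cat) (T : Monad C) (M N L : Alg T)
  (g : AlgHom N L) (f : AlgHom M N) : AlgHom M L.
Proof.
  exists (proj1_sig g ∘ proj1_sig f).
  destruct g as [g pg], f as [f pf]; simpl.
  rewrite mmap_cmp, cmp_assoc, pg, <- cmp_assoc, pf, cmp_assoc. reflexivity.
Defined.

Definition EM (C : Cat) (T : Monad C) : Cat.
Proof.
  refine {| ob := Alg T; hom := @AlgHom C T; idm := @alg_id C T;
            cmp := @alg_cmp C T |}.
  - intros A B f; apply sig_ext; simpl; apply cmp_idl.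
  - intros A B f; apply sig_ext; simpl; apply cmp_idr.
  - intros A B C' D f g h; apply sig_ext; simpl; apply cmp_assoc.
Defined.

Arguments EM {C} T.

Definition und (C : Cat) (T : Monad C) (M N : EM T) (h : hom (EM T) M N)
  : hom C (carrier M) (carrier N) := proj1_sig h.
Arguments und {C T M N} h.

Section AlgTens.
Variable C : SMCat.
Variable T : Bimonad C.

Lemma interchange (A B E A' B' E' : C) (f : hom C A B) (g : hom C B E)
      (f' : hom C A' B') (g' : hom C B' E') :
  (g ⊗m g') ∘ (f ⊗m f') = (g ∘ f) ⊗m (g' ∘ f').
Proof. symmetry; apply tensm_cmp. Qed.

Definition alg_tens (M N : Alg T) : Alg T.
Proof.
  refine {| carrier := carrier M ⊗ carrier N;
            act := (act M ⊗m act N) ∘ T2 T (carrier M) (carrier N) |}.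
  - rewrite <- cmp_assoc, eta_T2, interchange, !act_eta. apply tensm_id.
  - rewrite mmap_cmp, cmp_assoc, <- (cmp_assoc _ (T2 T _ _)), T2_nat.
    rewrite cmp_assoc, interchange, !act_mu, <- interchange.
    rewrite <- !cmp_assoc, mu_T2, !cmp_assoc. reflexivity.
Defined.

Definition alg_tensm (M M' N N' : Alg T) (h : hom (EM T) M M') (k : hom (EM T) N N')
  : hom (EM T) (alg_tens M N) (alg_tens M' N').
Proof.
  exists (und h ⊗m und k).
  destruct h as [h ph], k as [k pk]; unfold und; simpl.
  rewrite <- cmp_assoc, T2_nat, cmp_assoc, interchange, ph, pk.
  rewrite <- interchange, cmp_assoc. reflexivity.
Defined.
End AlgTens.
Arguments alg_tens {C T} M N.
Arguments alg_tensm {C T M M' N N'} h k.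

Section Fstar.
Variable C : SMCat.
Variables T P : Bimonad C.
Variable f : BimonadMor T P.

Definition fstar_ob (A : Alg P) : Alg T.
Proof.
  refine {| carrier := carrier A; act := act A ∘ f (carrier A) |}.
  - rewrite <- cmp_assoc, bmor_eta. apply act_eta.
  - rewrite mmap_cmp.
    transitivity (act A ∘ (f (carrier A) ∘ mmap T (act A)) ∘ mmap T (f (carrier A))).
    { rewrite !cmp_assoc; reflexivity. }
    rewrite <- bmor_nat.
    transitivity (act A ∘ mmap P (act A) ∘ (f (P (carrier A)) ∘ mmap T (f (carrier A)))).
    { rewrite !cmp_assoc; reflexivity. }
    rewrite <- bmor_nat, act_mu.
    transitivity (act A ∘ (mu P (carrier A) ∘ mmap P (f (carrier A)) ∘ f (T (carrier A)))).
    { rewrite !cmp_assoc; reflexivity. }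
    rewrite <- bmor_mu, !cmp_assoc. reflexivity.
Defined.

Definition fstar_hom (A B : Alg P) (h : hom (EM P) A B)
  : hom (EM T) (fstar_ob A) (fstar_ob B).
Proof.
  exists (und h). destruct h as [h ph]; unfold und; simpl.
  rewrite <- cmp_assoc, <- bmor_nat, cmp_assoc, ph, <- cmp_assoc. reflexivity.
Defined.

Definition fstar : Functor (EM P) (EM T).
Proof.
  refine (Build_Functor (EM P) (EM T) fstar_ob fstar_hom _ _).
  - intros A; apply sig_ext; reflexivity.
  - intros A B E g h; apply sig_ext; reflexivity.
Defined.

Definition fstar_str (A B : Alg P) :
  hom (EM T) (alg_tens (fstar A) (fstar B)) (fstar (alg_tens A B)).
Proof.
  exists (idm _); simpl.
  rewrite mmap_id, cmp_idr, cmp_idl, <- cmp_assoc, bmor_T2, cmp_assoc, interchange.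
  reflexivity.
Defined.

Definition fstar_str_inv (A B : Alg P) :
  hom (EM T) (fstar (alg_tens A B)) (alg_tens (fstar A) (fstar B)).
Proof.
  exists (idm _); simpl.
  rewrite mmap_id, cmp_idr, cmp_idl, <- cmp_assoc, bmor_T2, cmp_assoc, interchange.
  reflexivity.
Defined.
End Fstar.
Arguments fstar {C T P} f.
Arguments fstar_str {C T P} f A B.
Arguments fstar_str_inv {C T P} f A B.

Record Adjunction (D E : Cat) (U : Functor D E) := {
  ladj : Functor E D;
  adj_unit : forall X : E, hom E X (U (ladj X));
  adj_counit : forall A : D, hom D (ladj (U A)) A;
  adj_unit_nat : forall (X Y : E) (h : hom E X Y),
      fm U (fm ladj h) ∘ adj_unit X = adj_unit Y ∘ h;
  adj_counit_nat : forall (A B : D) (h : hom D A B),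
      h ∘ adj_counit A = adj_counit B ∘ fm ladj (fm U h);
  adj_tri_l : forall X : E, adj_counit (ladj X) ∘ fm ladj (adj_unit X) = idm (ladj X);
  adj_tri_r : forall A : D, fm U (adj_counit A) ∘ adj_unit (U A) = idm (U A) }.
Arguments Adjunction {D E} U.
Arguments ladj {D E U} a.
Arguments adj_unit {D E U} a X.
Arguments adj_counit {D E U} a A.

Section Induced.
Variables D E : Cat.
Variable U : Functor D E.
Variable adj : Adjunction U.
Local Notation F := (ladj adj).
Local Notation eps := (adj_counit adj).
Local Notation etaA := (adj_unit adj).

Definition induced_monad : Monad E.
Proof.
  refine {| mob := fun X => U (F X);
            mmap := fun A B h => fm U (fm F h);
            mu := fun X => fm U (eps (F X));
            eta := etaA |}.
  - intros A; rewrite !fm_id; reflexivity.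
  - intros A B C' f g; rewrite !fm_cmp; reflexivity.
  - intros A B f; rewrite <- !fm_cmp, adj_counit_nat; reflexivity.
  - intros A B f; apply adj_unit_nat.
  - intros A; rewrite <- !fm_cmp, <- adj_counit_nat; reflexivity.
  - intros A; apply adj_tri_r.
  - intros A; rewrite <- fm_cmp, adj_tri_l, fm_id; reflexivity.
Defined.

Definition comparison_ob (A : D) : Alg induced_monad.
Proof.
  refine (@Build_Alg E induced_monad (U A) (fm U (eps A)) _ _).
  - apply adj_tri_r.
  - simpl; rewrite <- !fm_cmp, <- adj_counit_nat; reflexivity.
Defined.

Definition comparison_hom (A B : D) (h : hom D A B) :
  hom (EM induced_monad) (comparison_ob A) (comparison_ob B).
Proof.
  exists (fm U h); simpl; rewrite <- !fm_cmp, adj_counit_nat; reflexivity.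
Defined.

Definition comparison : Functor D (EM induced_monad).
Proof.
  refine (Build_Functor D (EM induced_monad) comparison_ob comparison_hom _ _).
  - intros A; apply sig_ext; simpl; apply fm_id.
  - intros A B C' g h; apply sig_ext; simpl; apply fm_cmp.
Defined.
End Induced.
Arguments induced_monad {D E U} adj.
Arguments comparison {D E U} adj.

Definition monadic (D E : Cat) (U : Functor D E) : Prop :=
  inhabited (Adjunction U) /\ forall adj : Adjunction U, IsEquivalence (comparison adj).
Arguments monadic {D E} U.

Definition cross_quotientable (C : SMCat) (T P : Bimonad C) (f : BimonadMor T P)
  : Prop := monadic (fstar f).
Arguments cross_quotientable {C T P} f.

Section CrossQuotient.
Variable C : SMCat.
Variables T P : Bimonad C.
Variable f : BimonadMor T P.
Variable adj : Adjunction (fstar f).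

Definition cross_quotient : Monad (EM T) := induced_monad adj.

Local Notation Q := cross_quotient.
Local Notation F := (ladj adj).
Local Notation U := (fstar f).

(* Its comonoidal structure (the one making it a bimonad, induced by the
   strict monoidal right adjoint fstar f):
   Q2(M,N) = U( eps_{FM ⊗ FN} ∘ F(η_M ⊗ η_N) ) : Q(M⊗N) -> QM ⊗ QN *)
Definition cq_T2 (M N : Alg T) : hom (EM T) (Q (alg_tens M N)) (alg_tens (Q M) (Q N)) :=
  fstar_str_inv f (F M) (F N)
  ∘ fm U (adj_counit adj (alg_tens (F M) (F N))
          ∘ fm F (fstar_str f (F M) (F N)
                  ∘ alg_tensm (adj_unit adj M) (adj_unit adj N))).

Definition cq_leftHopf : Prop :=
  forall M N : Alg T,
    is_iso (alg_tensm (idm (Q M)) (mu Q N) ∘ cq_T2 M (Q N)).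

Definition cq_rightHopf : Prop :=
  forall M N : Alg T,
    is_iso (alg_tensm (mu Q M) (idm (Q N)) ∘ cq_T2 (Q M) N).
End CrossQuotient.
Arguments cross_quotient {C T P f} adj.
Arguments cq_T2 {C T P f} adj M N.
Arguments cq_leftHopf {C T P f} adj.
Arguments cq_rightHopf {C T P f} adj.
Arguments leftHopf {C} T.
Arguments rightHopf {C} T.
Arguments monad_preserves_rc {C} T.

(* The forgetful functor f^* : C^P -> C^T has a left adjoint: it sends a
   T-module (M, r) to the coequalizer of the reflexive pair P(r), mu_M P(f_M)
   : PTM ⇉ PM, computed in C and lifted to P-modules since P preserves
   reflexive coequalizers. The same lifting applies to the split pair
   attached to an algebra over the induced monad, which gives monadicity.

   For the Hopf property, the fusion operator of P ÷_f T at (M, N) is the map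
   induced on coequalizers by (PM ⊗ act)T_2(M, FN), where FN is a P-module.
   For a left Hopf bimonad B and any B-module A, (BX ⊗ act_A) T_2(X, A) is
   invertible; with these isomorphisms (for P and for T) the presentation pair
   of M ⊗ f^*(FN) becomes the presentation pair of M tensored with FN. As
   - ⊗ FN preserves reflexive coequalizers, the fusion operator is invertible.
   The right-handed statement is the left-handed one for the reversed tensor
   product. *)

From Stdlib Require Import ProofIrrelevance ClassicalEpsilon.

(* Without this, conversion problems involving [fstar] unfold it too eagerly. *)
Strategy 1000 [fstar fstar_ob].

(* [rewrite_chain H] rewrites with [H : l = r] inside a left-associated
   composite [... ∘ l ∘ ...], where [l] itself is a composite. *)
Ltac prepend p l :=
  lazymatch l with
  | @cmp ?C _ _ _ ?a ?b => let a' := prepend p a in constr:(@cmp C _ _ _ a' b)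
  | _ => constr:(p ∘ l)
  end.
Ltac reassoc := rewrite ?cmp_assoc.
Ltac rewrite_chain H :=
  lazymatch type of H with
  | @eq (@hom ?C ?A ?B) ?l ?r =>
    first [ rewrite H
          | let H2 := fresh "H" in
            assert (H2 : forall (Z : ob C) (p : hom C B Z),
                ltac:(let t := prepend p l in exact (t = p ∘ r)))
              by (intros; lazymatch goal with |- _ = ?pp ∘ _ =>
                    transitivity (pp ∘ l); [reassoc; reflexivity | rewrite H; reflexivity] end);
            rewrite H2; clear H2 ]
  end; reassoc.
Ltac rewrite_chain_rev H := rewrite_chain (eq_sym H).

(** * Coequalizers *)

Section Coequalizers.
Context {C : Cat}.

Lemma cancel_retraction {A B} (m : hom C A B) (r : hom C B A) :
  r ∘ m = idm A -> forall Z (u v : hom C Z A), m ∘ u = m ∘ v -> u = v.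
Proof.
  intros e Z u v e'. rewrite <- (cmp_idl u), <- (cmp_idl v), <- e, <- !cmp_assoc, e'.
  reflexivity.
Qed.

Lemma cancel_section {A B} (e : hom C A B) (s : hom C B A) :
  e ∘ s = idm B -> forall Z (u v : hom C B Z), u ∘ e = v ∘ e -> u = v.
Proof.
  intros es Z u v e'. rewrite <- (cmp_idr u), <- (cmp_idr v), <- es, !cmp_assoc, e'.
  reflexivity.
Qed.

Lemma coequalizer_epi {A B Q} {f g : hom C A B} {q : hom C B Q} (H : is_coequalizer f g q)
  {Z} (u v : hom C Q Z) : u ∘ q = v ∘ q -> u = v.
Proof.
  intros e. destruct H as [Hq Hu].
  destruct (Hu Z (u ∘ q)) as [w [_ Hw]].
  { rewrite <- !cmp_assoc, Hq. reflexivity. }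
  transitivity w; [symmetry|]; apply Hw; auto.
Qed.

Definition coeq_factor {A B Q} {f g : hom C A B} {q : hom C B Q} (H : is_coequalizer f g q)
  {Z} (h : hom C B Z) (e : h ∘ f = h ∘ g) : hom C Q Z :=
  proj1_sig (constructive_indefinite_description _
     (match proj2 H Z h e with ex_intro _ u (conj p _) => ex_intro _ u p end)).

Lemma coeq_factorK {A B Q} {f g : hom C A B} {q : hom C B Q} (H : is_coequalizer f g q)
  {Z} (h : hom C B Z) (e : h ∘ f = h ∘ g) : coeq_factor H h e ∘ q = h.
Proof. unfold coeq_factor. destruct constructive_indefinite_description; assumption. Qed.

Lemma split_coequalizer {A B Q} (f g : hom C A B) (q : hom C B Q) (s : hom C Q B) (t : hom C B A) :
  q ∘ f = q ∘ g -> q ∘ s = idm Q -> f ∘ t = idm B -> g ∘ t = s ∘ q -> is_coequalizer f g q.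
Proof.
  intros e1 e2 e3 e4. split; auto.
  intros Z h eh. exists (h ∘ s). split.
  - rewrite <- cmp_assoc, <- e4, cmp_assoc, <- eh, <- cmp_assoc, e3, cmp_idr. reflexivity.
  - intros u eu. rewrite <- eu, <- cmp_assoc, e2, cmp_idr. reflexivity.
Qed.

Lemma coequalizer_cmp_iso {A B Q Q'} {f g : hom C A B} {c : hom C B Q} {e : hom C B Q'}
  (Hc : is_coequalizer f g c) (He : is_coequalizer f g e) (x : hom C Q Q') :
  x ∘ c = e -> is_iso x.
Proof.
  intros ex. exists (coeq_factor He c (proj1 Hc)). split.
  - apply (coequalizer_epi Hc). rewrite <- cmp_assoc, ex, coeq_factorK, cmp_idl. reflexivity.
  - apply (coequalizer_epi He). rewrite <- cmp_assoc, coeq_factorK, ex, cmp_idl. reflexivity.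
Qed.

Lemma coequalizer_postcomp_iso {A B Q Q'} {f g : hom C A B} {q : hom C B Q} (v : hom C Q Q') :
  is_coequalizer f g q -> is_iso v -> is_coequalizer f g (v ∘ q).
Proof.
  intros Hq [vi [e1 e2]]. split.
  - rewrite <- !cmp_assoc, (proj1 Hq). reflexivity.
  - intros Z h eh. exists (coeq_factor Hq h eh ∘ vi). split.
    + rewrite cmp_assoc. rewrite_chain e1. rewrite cmp_idr. apply coeq_factorK.
    + intros u eu.
      assert (E : coeq_factor Hq h eh = u ∘ v).
      { apply (coequalizer_epi Hq). rewrite coeq_factorK, <- eu. reassoc. reflexivity. }
      rewrite E, <- cmp_assoc, e2, cmp_idr. reflexivity.
Qed.

Lemma coequalizer_transport {A A' B B' Q} (f g : hom C A B) (f' g' : hom C A' B')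
  (d : hom C B' Q) (k : hom C B B') (ki : hom C B' B) (s : hom C A' A) :
  is_coequalizer f' g' d -> ki ∘ k = idm B -> k ∘ ki = idm B' ->
  k ∘ f ∘ s = f' -> k ∘ g ∘ s = g' -> d ∘ k ∘ f = d ∘ k ∘ g ->
  is_coequalizer f g (d ∘ k).
Proof.
  intros Hd e1 e2 e3 e4 e5. split; auto.
  intros Z h eh.
  assert (eh' : (h ∘ ki) ∘ f' = (h ∘ ki) ∘ g').
  { rewrite <- e3, <- e4. reassoc. rewrite_chain e1. rewrite cmp_idr, eh. reflexivity. }
  exists (coeq_factor Hd _ eh'). split.
  - rewrite cmp_assoc, coeq_factorK, <- cmp_assoc, e1, cmp_idr. reflexivity.
  - intros u eu. apply (coequalizer_epi Hd).
    rewrite coeq_factorK, <- eu, <- !cmp_assoc, e2, cmp_idr. reflexivity.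
Qed.

Lemma iso_inv_comm {A1 A2 B1 B2} (h1 : hom C A1 B1) (h2 : hom C A2 B2)
  (i1 : hom C B1 A1) (i2 : hom C B2 A2) (u : hom C A1 A2) (v : hom C B1 B2) :
  h1 ∘ i1 = idm _ -> i2 ∘ h2 = idm _ -> h2 ∘ u = v ∘ h1 -> i2 ∘ v = u ∘ i1.
Proof.
  intros b1 a2 e.
  rewrite <- (cmp_idr (i2 ∘ v)), <- b1. reassoc. rewrite_chain_rev e.
  rewrite a2, cmp_idl. reflexivity.
Qed.
End Coequalizers.

(** * Algebras over a monad *)

Lemma alg_hom_act {C : Cat} {P : Monad C} {A B : Alg P} (h : hom (EM P) A B) :
  act B ∘ mmap P (und h) = und h ∘ act A.
Proof. exact (proj2_sig h). Qed.

Lemma alg_iso {C : Cat} {P : Monad C} {A B : EM P} (h : hom (EM P) A B) :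
  is_iso (und h) -> is_iso h.
Proof.
  intros [g [e1 e2]].
  assert (pg : act A ∘ mmap P g = g ∘ act B).
  { apply (cancel_retraction (und h) g e1).
    reassoc. rewrite <- alg_hom_act, <- cmp_assoc, <- mmap_cmp, e2, mmap_id, cmp_idr, cmp_idl.
    reflexivity. }
  exists (exist _ g pg). split; apply sig_ext; assumption.
Qed.

Lemma reflexive_pair_mmap {C : Cat} (P : Monad C) {A B} (f g : hom C A B) :
  reflexive_pair f g -> reflexive_pair (mmap P f) (mmap P g).
Proof. intros [s [e1 e2]]. exists (mmap P s). rewrite <- !mmap_cmp, e1, e2, mmap_id. auto. Qed.

(* A monad preserving reflexive coequalizers lifts them to its algebras. *)
Section CoeqAlg.
Context {C : Cat} (P : Monad C) (HP : monad_preserves_rc P).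
Variables (A B : Alg P) (g h : hom (EM P) A B) (Hr : reflexive_pair (und g) (und h))
  (Q : C) (q : hom C (carrier B) Q) (Hq : is_coequalizer (und g) (und h) q).

Let HPq := HP _ _ _ _ _ _ Hr Hq.
Let HPPq := HP _ _ _ _ _ _ (reflexive_pair_mmap P _ _ Hr) HPq.

Lemma coeq_alg_act_compat : (q ∘ act B) ∘ mmap P (und g) = (q ∘ act B) ∘ mmap P (und h).
Proof. rewrite <- !cmp_assoc, !alg_hom_act, !cmp_assoc, (proj1 Hq). reflexivity. Qed.

Definition coeq_alg_act : hom C (P Q) Q := coeq_factor HPq (q ∘ act B) coeq_alg_act_compat.

Lemma coeq_alg_actE : coeq_alg_act ∘ mmap P q = q ∘ act B.
Proof. apply coeq_factorK. Qed.

Lemma coeq_alg_act_eta : coeq_alg_act ∘ eta P Q = idm Q.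
Proof.
  apply (coequalizer_epi Hq). rewrite <- cmp_assoc, <- eta_nat, cmp_assoc, coeq_alg_actE,
    <- cmp_assoc, act_eta, cmp_idr, cmp_idl. reflexivity.
Qed.

Lemma coeq_alg_act_mu : coeq_alg_act ∘ mmap P coeq_alg_act = coeq_alg_act ∘ mu P Q.
Proof.
  apply (coequalizer_epi HPPq).
  rewrite <- cmp_assoc, <- mmap_cmp, coeq_alg_actE, mmap_cmp, cmp_assoc, coeq_alg_actE,
    <- cmp_assoc, act_mu, <- (cmp_assoc _ (mu P Q)), <- mu_nat.
  reassoc. rewrite coeq_alg_actE. reflexivity.
Qed.

Definition coeq_alg : Alg P := Build_Alg C P Q coeq_alg_act coeq_alg_act_eta coeq_alg_act_mu.
Definition coeq_alg_proj : hom (EM P) B coeq_alg := exist _ q coeq_alg_actE.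

Definition coeq_alg_factor {Z : Alg P} (k : hom (EM P) B Z) (ek : und k ∘ und g = und k ∘ und h)
  : hom (EM P) coeq_alg Z.
Proof.
  exists (coeq_factor Hq (und k) ek). simpl.
  apply (coequalizer_epi HPq).
  rewrite <- cmp_assoc, <- mmap_cmp, coeq_factorK, alg_hom_act,
    <- cmp_assoc, coeq_alg_actE, cmp_assoc, coeq_factorK. reflexivity.
Defined.

Lemma coeq_alg_factorK {Z : Alg P} (k : hom (EM P) B Z) (ek : und k ∘ und g = und k ∘ und h) :
  und (coeq_alg_factor k ek) ∘ q = und k.
Proof. apply coeq_factorK. Qed.
End CoeqAlg.

Definition free_alg {C : Cat} (P : Monad C) (X : C) : Alg P :=
  Build_Alg C P (P X) (mu P X) (mu_eta_l _ P X) (mu_assoc _ P X).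

Definition free_alg_map {C : Cat} (P : Monad C) {X Y : C} (k : hom C X Y) :
  hom (EM P) (free_alg P X) (free_alg P Y) := exist _ (mmap P k) (eq_sym (mu_nat _ P _ _ k)).

Definition free_alg_ext {C : Cat} (P : Monad C) {X : C} {A : Alg P} (k : hom C X (carrier A)) :
  hom (EM P) (free_alg P X) A.
Proof.
  exists (act A ∘ mmap P k). simpl.
  rewrite mmap_cmp, cmp_assoc, act_mu, <- cmp_assoc, <- mu_nat, cmp_assoc. reflexivity.
Defined.

Lemma free_alg_homE {C : Cat} (P : Monad C) {X : C} {A : Alg P} (x : hom (EM P) (free_alg P X) A) :
  und x = act A ∘ mmap P (und x ∘ eta P X).
Proof.
  rewrite mmap_cmp, cmp_assoc, alg_hom_act. simpl. rewrite <- cmp_assoc, mu_eta_r, cmp_idr.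
  reflexivity.
Qed.

Lemma free_alg_hom_ext {C : Cat} (P : Monad C) {X : C} {A : Alg P}
  (x y : hom (EM P) (free_alg P X) A) :
  und x ∘ eta P X = und y ∘ eta P X -> x = y.
Proof.
  intros e. apply sig_ext. change (und x = und y).
  rewrite (free_alg_homE P x), (free_alg_homE P y), e. reflexivity.
Qed.

Section UniversalArrows.
Context {D E : Cat} (U : Functor D E) (F0 : E -> D) (un : forall X, hom E X (U (F0 X)))
  (ext : forall X A, hom E X (U A) -> hom D (F0 X) A)
  (extK : forall X A k, fm U (ext X A k) ∘ un X = k)
  (ext_unique : forall X A k (g : hom D (F0 X) A), fm U g ∘ un X = k -> g = ext X A k).

Lemma universal_arrow_ext X A (g g' : hom D (F0 X) A) : fm U g ∘ un X = fm U g' ∘ un X -> g = g'.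
Proof. intros e. transitivity (ext X A (fm U g' ∘ un X)); [|symmetry]; apply ext_unique; auto. Qed.

Definition universal_arrows_functor : Functor E D.
Proof.
  refine {| fo := F0; fm := fun X Y h => ext X (F0 Y) (un Y ∘ h) |}.
  - intros A. symmetry; apply ext_unique. rewrite fm_id, cmp_idl, cmp_idr. reflexivity.
  - intros A B E' f g. symmetry; apply ext_unique.
    rewrite fm_cmp, <- cmp_assoc, extK, cmp_assoc, extK, <- cmp_assoc. reflexivity.
Defined.

Definition universal_arrows_adjunction : Adjunction U.
Proof.
  refine {| ladj := universal_arrows_functor; adj_unit := un;
            adj_counit := fun A => ext (U A) A (idm (U A)) |}.
  - intros X Y h. simpl. apply extK.
  - intros A B h. simpl. apply universal_arrow_ext.
    rewrite !fm_cmp, <- !cmp_assoc, !extK, cmp_assoc, extK, cmp_idr, cmp_idl. reflexivity.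
  - intros X. simpl. apply universal_arrow_ext.
    rewrite fm_cmp, <- cmp_assoc, extK, cmp_assoc, extK, fm_id. reflexivity.
  - intros A. apply extK.
Defined.
End UniversalArrows.

Lemma fstar_act {C : SMCat} {T P : Bimonad C} (f : BimonadMor T P) {M : Alg T} {A : Alg P}
  (k : hom (EM T) M (fstar f A)) :
  act A ∘ f (carrier A) ∘ mmap T (und k) = und k ∘ act M.
Proof. exact (proj2_sig k). Qed.

(** * The left adjoint of f^* and monadicity *)

Section FstarLeftAdjoint.
Context {C : SMCat} {T P : Bimonad C} (f : BimonadMor T P)
  (HRC : has_reflexive_coequalizers C) (HP : monad_preserves_rc P).

Definition pres_act (M : Alg T) :
  hom (EM P) (free_alg P (T (carrier M))) (free_alg P (carrier M)) :=
  free_alg_map P (act M).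
Definition pres_mor (M : Alg T) :
  hom (EM P) (free_alg P (T (carrier M))) (free_alg P (carrier M)) :=
  free_alg_ext P (A := free_alg P (carrier M)) (f (carrier M)).

Lemma pres_reflexive (M : Alg T) : reflexive_pair (und (pres_act M)) (und (pres_mor M)).
Proof.
  exists (mmap P (eta T (carrier M))). simpl. split.
  - rewrite <- mmap_cmp, act_eta, mmap_id. reflexivity.
  - rewrite <- cmp_assoc, <- mmap_cmp, bmor_eta, mu_eta_r. reflexivity.
Qed.

Let pres_coeq (M : Alg T) :=
  constructive_indefinite_description _ (HRC _ _ _ _ (pres_reflexive M)).
Definition pres_quot (M : Alg T) : hom C (P (carrier M)) (proj1_sig (pres_coeq M)) :=
  proj1_sig (constructive_indefinite_description _ (proj2_sig (pres_coeq M))).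
Lemma pres_quot_coeq (M : Alg T) : is_coequalizer (und (pres_act M)) (und (pres_mor M)) (pres_quot M).
Proof. exact (proj2_sig (constructive_indefinite_description _ (proj2_sig (pres_coeq M)))). Qed.

Definition fstar_ladj_ob (M : Alg T) : Alg P :=
  coeq_alg P HP _ _ _ _ (pres_reflexive M) _ _ (pres_quot_coeq M).

Definition fstar_ladj_unit (M : Alg T) : hom (EM T) M (fstar f (fstar_ladj_ob M)).
Proof.
  exists (pres_quot M ∘ eta P (carrier M)). simpl.
  rewrite <- cmp_assoc, <- bmor_nat, mmap_cmp. reassoc.
  pose proof (coeq_alg_actE P HP _ _ _ _ (pres_reflexive M) _ _ (pres_quot_coeq M)) as L; simpl in L.
  rewrite L. rewrite_chain (mu_eta_r _ P (carrier M)). rewrite cmp_idr.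
  rewrite_chain_rev (eta_nat _ P _ _ (act M)).
  pose proof (proj1 (pres_quot_coeq M)) as E; simpl in E. rewrite_chain E.
  rewrite_chain (eta_nat _ P _ _ (f (carrier M))). rewrite_chain (mu_eta_l _ P (carrier M)).
  rewrite cmp_idr. reflexivity.
Defined.

Lemma fstar_ladj_ext_compat (M : Alg T) (A : Alg P) (k : hom (EM T) M (fstar f A)) :
  und (free_alg_ext P (A := A) (und k)) ∘ und (pres_act M)
  = und (free_alg_ext P (A := A) (und k)) ∘ und (pres_mor M).
Proof.
  change (act A ∘ mmap P (und k) ∘ mmap P (act M)
          = act A ∘ mmap P (und k) ∘ (mu P (carrier M) ∘ mmap P (f (carrier M)))).
  rewrite <- cmp_assoc, <- mmap_cmp, <- fstar_act, !mmap_cmp. reassoc. rewrite act_mu.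
  rewrite_chain (mu_nat _ P _ _ (und k)).
  rewrite_chain_rev (mmap_cmp _ P _ _ _ (f (carrier M)) (mmap P (und k))).
  rewrite bmor_nat, mmap_cmp. reassoc. reflexivity.
Qed.

Definition fstar_ladj_ext (M : Alg T) (A : Alg P) (k : hom (EM T) M (fstar f A)) :
  hom (EM P) (fstar_ladj_ob M) A :=
  coeq_alg_factor P HP _ _ _ _ (pres_reflexive M) _ _ (pres_quot_coeq M)
    (free_alg_ext P (A := A) (und k)) (fstar_ladj_ext_compat M A k).

Lemma fstar_ladj_extE M A k : und (fstar_ladj_ext M A k) ∘ pres_quot M = act A ∘ mmap P (und k).
Proof. exact (coeq_alg_factorK _ _ _ _ _ _ _ _ _ _ _ (fstar_ladj_ext_compat M A k)). Qed.

Lemma fstar_ladj_extK M A k : fm (fstar f) (fstar_ladj_ext M A k) ∘ fstar_ladj_unit M = k.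
Proof.
  apply sig_ext. change (und (fstar_ladj_ext M A k) ∘ (pres_quot M ∘ eta P (carrier M)) = und k).
  rewrite cmp_assoc, fstar_ladj_extE, <- cmp_assoc, eta_nat, cmp_assoc.
  change (carrier (fstar f A)) with (carrier A). rewrite act_eta, cmp_idl. reflexivity.
Qed.

Lemma fstar_ladj_ext_unique M A k (g : hom (EM P) (fstar_ladj_ob M) A) :
  fm (fstar f) g ∘ fstar_ladj_unit M = k -> g = fstar_ladj_ext M A k.
Proof.
  intros e. apply sig_ext. apply (coequalizer_epi (pres_quot_coeq M)).
  change (und g ∘ pres_quot M = und (fstar_ladj_ext M A k) ∘ pres_quot M).
  rewrite fstar_ladj_extE.
  change (und (g ∘ coeq_alg_proj P HP _ _ _ _ (pres_reflexive M) _ _ (pres_quot_coeq M))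
          = und (free_alg_ext P (A := A) (und k))).
  f_equal. apply free_alg_hom_ext.
  change ((und g ∘ pres_quot M) ∘ eta P (carrier M)
          = act A ∘ mmap P (und k) ∘ eta P (carrier M)).
  rewrite <- cmp_assoc.
  change (und (fm (fstar f) g ∘ fstar_ladj_unit M) = act A ∘ mmap P (und k) ∘ eta P (carrier M)).
  rewrite e, <- cmp_assoc, eta_nat, cmp_assoc. change (carrier (fstar f A)) with (carrier A).
  rewrite act_eta, cmp_idl. reflexivity.
Qed.

Definition fstar_adjunction : Adjunction (fstar f) :=
  universal_arrows_adjunction (fstar f) fstar_ladj_ob fstar_ladj_unit fstar_ladj_ext
    fstar_ladj_extK fstar_ladj_ext_unique.
End FstarLeftAdjoint.

Section AdjunctionFacts.
Context {C : SMCat} {T P : Bimonad C} (f : BimonadMor T P) (adj : Adjunction (fstar f)).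
Local Notation U := (fstar f).
Local Notation F := (ladj adj).

Definition unitC (X : EM T) : hom C (carrier X) (carrier (F X)) := und (adj_unit adj X).
Definition counitC (A : EM P) : hom C (carrier (F (U A))) (carrier A) := und (adj_counit adj A).
Definition FC {X Y : EM T} (h : hom (EM T) X Y) : hom C (carrier (F X)) (carrier (F Y)) :=
  und (fm F h).

Lemma unitC_nat X Y (h : hom (EM T) X Y) : FC h ∘ unitC X = unitC Y ∘ und h.
Proof. exact (f_equal (@und _ _ _ _) (adj_unit_nat _ _ _ adj X Y h)). Qed.
Lemma counitC_nat (A B : EM P) (h : hom (EM P) A B) : und h ∘ counitC A = counitC B ∘ FC (fm U h).
Proof. exact (f_equal (@und _ _ _ _) (adj_counit_nat _ _ _ adj A B h)). Qed.
Lemma counitC_unitC (A : EM P) : counitC A ∘ unitC (U A) = idm (carrier A).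
Proof. exact (f_equal (@und _ _ _ _) (adj_tri_r _ _ _ adj A)). Qed.
Lemma counitC_FunitC (X : EM T) : counitC (F X) ∘ FC (adj_unit adj X) = idm (carrier (F X)).
Proof. exact (f_equal (@und _ _ _ _) (adj_tri_l _ _ _ adj X)). Qed.
Lemma counitC_act (A : EM P) : act A ∘ mmap P (counitC A) = counitC A ∘ act (F (U A)).
Proof. exact (alg_hom_act (adj_counit adj A)). Qed.
Lemma FC_act {X Y : EM T} (h : hom (EM T) X Y) : act (F Y) ∘ mmap P (FC h) = FC h ∘ act (F X).
Proof. exact (alg_hom_act (fm F h)). Qed.
Lemma FC_cmp {X Y Z : EM T} (g : hom (EM T) Y Z) (h : hom (EM T) X Y) : FC (g ∘ h) = FC g ∘ FC h.
Proof. exact (f_equal (@und _ _ _ _) (fm_cmp _ _ F _ _ _ h g)). Qed.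
Lemma FC_id (X : EM T) : FC (idm X) = idm (carrier (F X)).
Proof. exact (f_equal (@und _ _ _ _) (fm_id _ _ F X)). Qed.

(* [cM X] is the P-linear extension of the unit; it is the quotient map
   presenting [F X] as a coequalizer (see [cM_coequalizer]). *)
Definition cM (X : EM T) : hom C (P (carrier X)) (carrier (F X)) :=
  act (F X) ∘ mmap P (unitC X).

Lemma counitC_cM (A : EM P) : counitC A ∘ cM (U A) = act A.
Proof.
  unfold cM. rewrite cmp_assoc, <- counitC_act, <- cmp_assoc, <- mmap_cmp.
  rewrite counitC_unitC, mmap_id, cmp_idr. reflexivity.
Qed.

Lemma transposeC (X : EM T) (B : EM P) (x : hom (EM P) (F X) B) :
  und x = counitC B ∘ FC (fm U x ∘ adj_unit adj X).
Proof.
  rewrite FC_cmp, cmp_assoc, <- counitC_nat, <- cmp_assoc, counitC_FunitC, cmp_idr. reflexivity.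
Qed.

Lemma ladj_hom_ext (X : EM T) (A : EM P) (x y : hom (EM P) (F X) A) :
  und x ∘ unitC X = und y ∘ unitC X -> x = y.
Proof.
  intros e. apply sig_ext. change (und x = und y).
  rewrite (transposeC X A x), (transposeC X A y). do 2 f_equal. apply sig_ext. exact e.
Qed.

Lemma counitC_FC_cM (X : EM T) (W : EM P) (k : hom (EM T) X (U W)) :
  counitC W ∘ FC k ∘ cM X = act W ∘ mmap P (und k).
Proof.
  unfold cM. reassoc. rewrite_chain_rev (FC_act k).
  rewrite_chain_rev (mmap_cmp _ P _ _ _ (unitC X) (FC k)).
  rewrite unitC_nat, mmap_cmp. reassoc. rewrite_chain_rev (counitC_act W).
  rewrite_chain_rev (mmap_cmp _ P _ _ _ (unitC (U W)) (counitC W)).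
  rewrite counitC_unitC, mmap_id, cmp_idr. reflexivity.
Qed.
End AdjunctionFacts.

(* The inverse of the comparison functor: a [P ÷_f T]-algebra [Y] becomes a
   P-algebra with action [qstr Y ∘ cM]. *)
Section Monadicity.
Context {C : SMCat} {T P : Bimonad C} (f : BimonadMor T P)
  (HRC : has_reflexive_coequalizers C) (HP : monad_preserves_rc P)
  (adj : Adjunction (fstar f)).
Local Notation U := (fstar f).
Local Notation F := (ladj adj).
Local Notation Q := (induced_monad adj).
Local Notation unitC := (unitC f adj).
Local Notation counitC := (counitC f adj).
Local Notation FC := (FC f adj).
Local Notation cM := (cM f adj).

Definition qstr (Y : EM Q) : hom C (carrier (F (carrier Y))) (carrier (carrier Y)) := und (act Y).

Lemma qstr_unitC (Y : EM Q) : qstr Y ∘ unitC (carrier Y) = idm _.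
Proof. exact (f_equal (@und _ T _ _) (act_eta _ _ Y)). Qed.
Lemma qstr_mu (Y : EM Q) : qstr Y ∘ FC (act Y) = qstr Y ∘ counitC (F (carrier Y)).
Proof. exact (f_equal (@und _ T _ _) (act_mu _ _ Y)). Qed.
Lemma qstr_act (Y : EM Q) :
  act (carrier Y) ∘ mmap T (qstr Y) = qstr Y ∘ (act (F (carrier Y)) ∘ f (carrier (F (carrier Y)))).
Proof. exact (alg_hom_act (act Y)). Qed.
Lemma qstr_hom (Y Y' : EM Q) (g : hom (EM Q) Y Y') :
  qstr Y' ∘ FC (und g) = und (und g) ∘ qstr Y.
Proof. exact (f_equal (@und _ T _ _) (alg_hom_act g)). Qed.

Definition qalg_act (Y : EM Q) : hom C (P (carrier (carrier Y))) (carrier (carrier Y)) :=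
  qstr Y ∘ cM (carrier Y).

(* [qstr Y] is a split coequalizer of [(counit, F (act Y))]; lifting the
   coequalizer of this pair to P-algebras embeds [Y] into a P-algebra. *)
Lemma qalg_embedding (Y : EM Q) : exists (B : Alg P) (qh : hom (EM P) (F (carrier Y)) B)
  (phi : hom C (carrier (carrier Y)) (carrier B)) (psi : hom C (carrier B) (carrier (carrier Y))),
  psi ∘ phi = idm _ /\ phi ∘ qstr Y = und qh.
Proof.
  assert (Hr : reflexive_pair (und (adj_counit adj (F (carrier Y)))) (und (fm F (act Y)))).
  { exists (FC (adj_unit adj (carrier Y))). split.
    - apply counitC_FunitC.
    - change (FC (act Y) ∘ FC (adj_unit adj (carrier Y)) = idm _).
      rewrite <- FC_cmp, <- FC_id. f_equal. exact (act_eta _ _ Y). }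
  assert (Hx : is_coequalizer (counitC (F (carrier Y))) (FC (act Y)) (qstr Y)).
  { apply (split_coequalizer _ _ _ (unitC (carrier Y)) (unitC (U (F (carrier Y))))).
    - symmetry; apply qstr_mu.
    - apply qstr_unitC.
    - apply counitC_unitC.
    - exact (unitC_nat f adj (U (F (carrier Y))) (carrier Y) (act Y)). }
  destruct (HRC _ _ _ _ Hr) as [Q0 [q Hq]].
  exists (coeq_alg P HP _ _ _ _ Hr _ _ Hq), (coeq_alg_proj P HP _ _ _ _ Hr _ _ Hq),
    (coeq_factor Hx q (proj1 Hq)), (coeq_factor Hq (qstr Y) (proj1 Hx)).
  split.
  - apply (coequalizer_epi Hx). rewrite <- cmp_assoc, coeq_factorK, cmp_idl. apply coeq_factorK.
  - apply coeq_factorK.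
Qed.

Section Embedding.
Variables (Y : EM Q) (B : Alg P) (qh : hom (EM P) (F (carrier Y)) B)
  (phi : hom C (carrier (carrier Y)) (carrier B)) (psi : hom C (carrier B) (carrier (carrier Y)))
  (phi_retr : psi ∘ phi = idm _) (phi_qstr : phi ∘ qstr Y = und qh).

Lemma embedding_act : phi ∘ qalg_act Y = act B ∘ mmap P phi.
Proof.
  unfold qalg_act, cM. reassoc.
  rewrite phi_qstr, <- alg_hom_act, <- cmp_assoc, <- mmap_cmp, <- phi_qstr, <- cmp_assoc,
    qstr_unitC, cmp_idr. reflexivity.
Qed.

Lemma embedding_qalg_act_eta : qalg_act Y ∘ eta P _ = idm _.
Proof.
  apply (cancel_retraction phi psi phi_retr). rewrite cmp_assoc, embedding_act, <- cmp_assoc,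
    eta_nat, cmp_assoc, act_eta, cmp_idl, cmp_idr. reflexivity.
Qed.

Lemma embedding_qalg_act_mu : qalg_act Y ∘ mmap P (qalg_act Y) = qalg_act Y ∘ mu P _.
Proof.
  apply (cancel_retraction phi psi phi_retr).
  rewrite !cmp_assoc, embedding_act, <- cmp_assoc, <- mmap_cmp, embedding_act.
  rewrite mmap_cmp, cmp_assoc, act_mu, <- !cmp_assoc, <- mu_nat. reflexivity.
Qed.

Lemma embedding_qalg_act_bmor : qalg_act Y ∘ f _ = act (carrier Y).
Proof.
  apply (cancel_retraction phi psi phi_retr).
  apply (cancel_section (mmap T (qstr Y)) (mmap T (unitC (carrier Y)))).
  { rewrite <- mmap_cmp, qstr_unitC, mmap_id. reflexivity. }
  reassoc. rewrite embedding_act. rewrite_chain (bmor_nat _ _ _ f _ _ phi).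
  rewrite_chain_rev (mmap_cmp _ T _ _ _ (qstr Y) phi).
  rewrite phi_qstr. rewrite_chain_rev (bmor_nat _ _ _ f _ _ (und qh)).
  rewrite_chain (alg_hom_act qh). rewrite <- phi_qstr. rewrite_chain (qstr_act Y). reflexivity.
Qed.
End Embedding.

Lemma qalg_act_eta Y : qalg_act Y ∘ eta P _ = idm _.
Proof.
  destruct (qalg_embedding Y) as (B & qh & phi & psi & e1 & e2).
  exact (embedding_qalg_act_eta Y B qh phi psi e1 e2).
Qed.
Lemma qalg_act_mu Y : qalg_act Y ∘ mmap P (qalg_act Y) = qalg_act Y ∘ mu P _.
Proof.
  destruct (qalg_embedding Y) as (B & qh & phi & psi & e1 & e2).
  exact (embedding_qalg_act_mu Y B qh phi psi e1 e2).
Qed.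
Lemma qalg_act_bmor Y : qalg_act Y ∘ f _ = act (carrier Y).
Proof.
  destruct (qalg_embedding Y) as (B & qh & phi & psi & e1 & e2).
  exact (embedding_qalg_act_bmor Y B qh phi psi e1 e2).
Qed.

Definition qalg_palg (Y : EM Q) : Alg P :=
  Build_Alg C P (carrier (carrier Y)) (qalg_act Y) (qalg_act_eta Y) (qalg_act_mu Y).

Definition qalg_palg_hom (Y Y' : EM Q) (g : hom (EM Q) Y Y') :
  hom (EM P) (qalg_palg Y) (qalg_palg Y').
Proof.
  exists (und (und g)). change (qalg_act Y' ∘ mmap P (und (und g)) = und (und g) ∘ qalg_act Y).
  unfold qalg_act, cM. reassoc. rewrite <- cmp_assoc, <- mmap_cmp, <- unitC_nat, mmap_cmp. reassoc.
  rewrite_chain (FC_act f adj (und g)). rewrite qstr_hom. reassoc. reflexivity.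
Defined.

Definition comparison_inverse : Functor (EM Q) (EM P).
Proof.
  refine (Build_Functor (EM Q) (EM P) qalg_palg qalg_palg_hom _ _).
  - intros A; apply sig_ext; reflexivity.
  - intros A B E g h; apply sig_ext; reflexivity.
Defined.

Definition qalg_palg_to (Y : EM Q) : hom (EM T) (U (qalg_palg Y)) (carrier Y).
Proof.
  exists (idm (carrier (carrier Y))).
  change (act (carrier Y) ∘ mmap T (idm _) = idm _ ∘ (qalg_act Y ∘ f _)).
  rewrite mmap_id, cmp_idr, cmp_idl, qalg_act_bmor. reflexivity.
Defined.
Definition qalg_palg_from (Y : EM Q) : hom (EM T) (carrier Y) (U (qalg_palg Y)).
Proof.
  exists (idm (carrier (carrier Y))).
  change ((qalg_act Y ∘ f _) ∘ mmap T (idm _) = idm _ ∘ act (carrier Y)).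
  rewrite mmap_id, cmp_idr, cmp_idl, qalg_act_bmor. reflexivity.
Defined.

Lemma counitC_qalg_palg (Y : EM Q) : counitC (qalg_palg Y) = qstr Y ∘ FC (qalg_palg_to Y).
Proof.
  destruct (qalg_embedding Y) as (B & qh & phi & psi & phi_retr & phi_qstr).
  pose (Phi := exist _ phi (eq_sym (embedding_act Y B qh phi phi_qstr))
         : hom (EM P) (qalg_palg Y) B).
  assert (phi_act : act B ∘ f (carrier B) ∘ mmap T phi = phi ∘ act (carrier Y)).
  { rewrite <- (embedding_qalg_act_bmor Y B qh phi psi phi_retr phi_qstr), <- cmp_assoc,
      <- bmor_nat. reassoc. rewrite (embedding_act Y B qh phi phi_qstr). reflexivity. }
  pose (k := exist _ phi phi_act : hom (EM T) (carrier Y) (U B)).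
  apply (cancel_retraction phi psi phi_retr).
  change (und Phi ∘ counitC (qalg_palg Y) = phi ∘ (qstr Y ∘ FC (qalg_palg_to Y))).
  rewrite counitC_nat.
  assert (E1 : fm U Phi = k ∘ qalg_palg_to Y).
  { apply sig_ext. symmetry. apply cmp_idr. }
  assert (E2 : fm U qh ∘ adj_unit adj (carrier Y) = k).
  { apply sig_ext. change (und qh ∘ unitC (carrier Y) = phi).
    rewrite <- phi_qstr, <- cmp_assoc, qstr_unitC, cmp_idr. reflexivity. }
  rewrite E1, FC_cmp. reassoc. rewrite <- E2, <- transposeC, <- phi_qstr. reflexivity.
Qed.

Definition comparison_counit (Y : EM Q) : hom (EM Q) (comparison adj (qalg_palg Y)) Y.
Proof.
  exists (qalg_palg_to Y). apply sig_ext.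
  change (qstr Y ∘ FC (qalg_palg_to Y) = idm _ ∘ counitC (qalg_palg Y)).
  rewrite cmp_idl, counitC_qalg_palg. reflexivity.
Defined.

Definition comparison_counit_inv (Y : EM Q) : hom (EM Q) Y (comparison adj (qalg_palg Y)).
Proof.
  exists (qalg_palg_from Y). apply sig_ext.
  change (counitC (qalg_palg Y) ∘ FC (qalg_palg_from Y) = idm _ ∘ qstr Y).
  rewrite counitC_qalg_palg, <- cmp_assoc, <- FC_cmp.
  replace (qalg_palg_to Y ∘ qalg_palg_from Y) with (idm (carrier Y))
    by (apply sig_ext; symmetry; apply cmp_idl).
  rewrite FC_id, cmp_idr, cmp_idl. reflexivity.
Defined.

Definition comparison_unit (A : EM P) : hom (EM P) (comparison_inverse (comparison adj A)) A.
Proof.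
  exists (idm (carrier A)).
  change (act A ∘ mmap P (idm _) = idm _ ∘ (counitC A ∘ cM (U A))).
  rewrite counitC_cM, mmap_id, cmp_idr, cmp_idl. reflexivity.
Defined.

Definition comparison_unit_inv (A : EM P) : hom (EM P) A (comparison_inverse (comparison adj A)).
Proof.
  exists (idm (carrier A)).
  change ((counitC A ∘ cM (U A)) ∘ mmap P (idm _) = idm _ ∘ act A).
  rewrite counitC_cM, mmap_id, cmp_idr, cmp_idl. reflexivity.
Defined.

Lemma comparison_equivalence : IsEquivalence (comparison adj).
Proof.
  exists comparison_inverse. split.
  - exists comparison_unit. split.
    + intros A. exists (comparison_unit_inv A). split; apply sig_ext; exact (cmp_idl _).
    + intros A B h. apply sig_ext. exact (eq_trans (cmp_idr _) (eq_sym (cmp_idl _))).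
  - exists comparison_counit. split.
    + intros Y. exists (comparison_counit_inv Y). split; apply sig_ext; apply sig_ext; exact (cmp_idl _).
    + intros Y Y' g. apply sig_ext; apply sig_ext. exact (eq_trans (cmp_idr _) (eq_sym (cmp_idl _))).
Qed.
End Monadicity.

Lemma fstar_monadic {C : SMCat} {T P : Bimonad C} (f : BimonadMor T P)
  (HRC : has_reflexive_coequalizers C) (HP : monad_preserves_rc P) : cross_quotientable f.
Proof.
  split.
  - constructor. exact (fstar_adjunction f HRC HP).
  - intros adj. exact (comparison_equivalence f HRC HP adj).
Qed.

(* Any left adjoint of [f^*] is isomorphic to the one built from coequalizers,
   so [cM M] is a coequalizer of the presentation pair of [M]. *)
Lemma cM_coequalizer {C : SMCat} {T P : Bimonad C} (f : BimonadMor T P)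
  (HRC : has_reflexive_coequalizers C) (HP : monad_preserves_rc P)
  (adj : Adjunction (fstar f)) (M : EM T) :
  is_coequalizer (mmap P (act M)) (mu P (carrier M) ∘ mmap P (f (carrier M))) (cM f adj M).
Proof.
  pose (v := fstar_ladj_ext f HRC HP M (ladj adj M) (adj_unit adj M)).
  pose (w := adj_counit adj (fstar_ladj_ob f HRC HP M) ∘ fm (ladj adj) (fstar_ladj_unit f HRC HP M)).
  assert (v_quot : und v ∘ pres_quot f HRC M = cM f adj M) by apply fstar_ladj_extE.
  assert (w_unit : und w ∘ unitC f adj M = pres_quot f HRC M ∘ eta P (carrier M)).
  { change (counitC f adj (fstar_ladj_ob f HRC HP M) ∘ FC f adj (fstar_ladj_unit f HRC HP M)
              ∘ unitC f adj M
            = pres_quot f HRC M ∘ eta P (carrier M)).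
    rewrite <- cmp_assoc, unitC_nat, cmp_assoc, counitC_unitC, cmp_idl. reflexivity. }
  assert (vw : v ∘ w = idm (ladj adj M)).
  { apply ladj_hom_ext. change (und v ∘ und w ∘ unitC f adj M = idm _ ∘ unitC f adj M).
    rewrite <- cmp_assoc, w_unit, cmp_assoc, v_quot. unfold cM.
    rewrite <- cmp_assoc, eta_nat, cmp_assoc, act_eta, !cmp_idl. reflexivity. }
  assert (wv : w ∘ v = @idm (EM P) (fstar_ladj_ob f HRC HP M)).
  { apply sig_ext. apply (coequalizer_epi (pres_quot_coeq f HRC M)).
    change (und w ∘ und v ∘ pres_quot f HRC M = idm _ ∘ pres_quot f HRC M).
    rewrite <- cmp_assoc, v_quot, cmp_idl. unfold cM.
    rewrite cmp_assoc, <- alg_hom_act, <- cmp_assoc, <- mmap_cmp, w_unit, mmap_cmp. reassoc.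
    pose proof (coeq_alg_actE P HP _ _ _ _ (pres_reflexive f M) _ _ (pres_quot_coeq f HRC M)) as L.
    change (act (fstar_ladj_ob f HRC HP M) ∘ mmap P (pres_quot f HRC M)
            = pres_quot f HRC M ∘ mu P (carrier M)) in L.
    rewrite L, <- cmp_assoc, mu_eta_r, cmp_idr. reflexivity. }
  rewrite <- v_quot. apply coequalizer_postcomp_iso; [apply pres_quot_coeq|].
  exists (und w). split; [exact (f_equal (@und _ P _ _) wv) | exact (f_equal (@und _ P _ _) vw)].
Qed.

(** * Hopf module maps *)

Lemma cmp_interchange {C : SMCat} {A B E A' B' E' Z : C} (p : hom C (E ⊗ E') Z)
  (f : hom C A B) (g : hom C B E) (f' : hom C A' B') (g' : hom C B' E') :
  p ∘ (g ⊗m g') ∘ (f ⊗m f') = p ∘ ((g ∘ f) ⊗m (g' ∘ f')).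
Proof. rewrite <- cmp_assoc, interchange. reflexivity. Qed.

Ltac merge_tensors := repeat first [rewrite cmp_interchange | rewrite interchange].

Section HopfModuleMap.
Context {C : SMCat} (B : Bimonad C).

(* For the free module [A = B Y] this is the left fusion operator [H^l_{X,Y}]. *)
Definition hopf_module_map (X : C) (A : Alg B) : hom C (B (X ⊗ carrier A)) (B X ⊗ carrier A) :=
  (idm (B X) ⊗m act A) ∘ T2 B X (carrier A).

Lemma hopf_module_mapE (X : C) (A : Alg B) :
  (idm (B X) ⊗m act A) ∘ T2 B X (carrier A) = hopf_module_map X A.
Proof. reflexivity. Qed.

Lemma hopf_module_map_natl (X Y : C) (A : Alg B) (g : hom C X Y) :
  hopf_module_map Y A ∘ mmap B (g ⊗m idm (carrier A))
  = (mmap B g ⊗m idm (carrier A)) ∘ hopf_module_map X A.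
Proof.
  unfold hopf_module_map. rewrite <- cmp_assoc, T2_nat, mmap_id. reassoc. merge_tensors.
  rewrite !cmp_idl, !cmp_idr. reflexivity.
Qed.

Lemma hopf_module_map_natr (X : C) (A A' : Alg B) (h : hom (EM B) A A') :
  hopf_module_map X A' ∘ mmap B (idm X ⊗m und h) = (idm (B X) ⊗m und h) ∘ hopf_module_map X A.
Proof.
  unfold hopf_module_map. rewrite <- cmp_assoc, T2_nat, mmap_id. reassoc. merge_tensors.
  rewrite alg_hom_act, !cmp_idl. reflexivity.
Qed.

Lemma hopf_module_map_free_eta (X Y : C) :
  hopf_module_map X (free_alg B Y) ∘ mmap B (idm X ⊗m eta B Y) = T2 B X Y.
Proof.
  unfold hopf_module_map. rewrite <- cmp_assoc, T2_nat, mmap_id. reassoc. merge_tensors.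
  simpl. rewrite mu_eta_r, cmp_idl, tensm_id, cmp_idl. reflexivity.
Qed.

Lemma hopf_module_map_mu (X : C) (A : Alg B) :
  hopf_module_map X A ∘ mu B (X ⊗ carrier A)
  = (mu B X ⊗m idm (carrier A)) ∘ hopf_module_map (B X) A ∘ mmap B (hopf_module_map X A).
Proof.
  unfold hopf_module_map. rewrite <- cmp_assoc, mu_T2. reassoc. merge_tensors.
  rewrite mmap_cmp. reassoc. rewrite_chain (T2_nat _ B _ _ _ _ (idm (B X)) (act A)).
  rewrite !mmap_id. merge_tensors. rewrite <- act_mu, !cmp_idl, !cmp_idr. reflexivity.
Qed.

Lemma alg_tens_actE (M A : Alg B) :
  act (alg_tens M A) = (act M ⊗m idm (carrier A)) ∘ hopf_module_map (carrier M) A.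
Proof.
  unfold hopf_module_map. simpl. reassoc. merge_tensors. rewrite cmp_idl, cmp_idr. reflexivity.
Qed.

Lemma hopf_module_map_factor (X : C) (A : Alg B) {Z W : C} (c : hom C (B X) Z)
  (c' : hom C (B (carrier A)) W) (e : hom C W (carrier A)) :
  e ∘ c' = act A ->
  (idm Z ⊗m e) ∘ (c ⊗m c') ∘ T2 B X (carrier A) = (c ⊗m idm (carrier A)) ∘ hopf_module_map X A.
Proof.
  intros E. unfold hopf_module_map. rewrite <- E. reassoc. merge_tensors. rewrite !cmp_idl, !cmp_idr.
  reflexivity.
Qed.

Definition free_alg_mu (Y : C) : hom (EM B) (free_alg B (B Y)) (free_alg B Y) :=
  exist _ (mu B Y) (mu_assoc _ B Y).

Hypothesis HB : leftHopf B.

(* The inverse is [B(X ⊗ act A) ∘ (H^l_{X,A})^{-1} ∘ (BX ⊗ eta_A)]. *)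
Lemma leftHopf_module_iso (X : C) (A : Alg B) : is_iso (hopf_module_map X A).
Proof.
  destruct (HB X (carrier A)) as [Hi [h1 h2]].
  change (Hi ∘ hopf_module_map X (free_alg B (carrier A)) = idm _) in h1.
  change (hopf_module_map X (free_alg B (carrier A)) ∘ Hi = idm _) in h2.
  destruct (HB X (B (carrier A))) as [Hi' [_ h2']].
  change (hopf_module_map X (free_alg B (B (carrier A))) ∘ Hi' = idm _) in h2'.
  exists (mmap B (idm X ⊗m act A) ∘ Hi ∘ (idm (B X) ⊗m eta B (carrier A))). split.
  - assert (E1 : (idm (B X) ⊗m eta B (carrier A)) ∘ (idm (B X) ⊗m act A)
                 = (idm (B X) ⊗m mmap B (act A)) ∘ (idm (B X) ⊗m eta B (B (carrier A)))).
    { rewrite !interchange, eta_nat. reflexivity. }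
    assert (E2 : Hi ∘ (idm (B X) ⊗m mmap B (act A)) = mmap B (idm X ⊗m mmap B (act A)) ∘ Hi').
    { apply (iso_inv_comm (hopf_module_map X (free_alg B (B (carrier A))))
                          (hopf_module_map X (free_alg B (carrier A)))); auto.
      exact (hopf_module_map_natr X _ _ (free_alg_map B (act A))). }
    assert (E3 : mmap B (idm X ⊗m mu B (carrier A)) ∘ Hi' = Hi ∘ (idm (B X) ⊗m mu B (carrier A))).
    { symmetry. apply (iso_inv_comm (hopf_module_map X (free_alg B (B (carrier A))))
                                   (hopf_module_map X (free_alg B (carrier A)))); auto.
      exact (hopf_module_map_natr X _ _ (free_alg_mu (carrier A))). }
    assert (E4 : Hi ∘ T2 B X (carrier A) = mmap B (idm X ⊗m eta B (carrier A))).
    { rewrite <- hopf_module_map_free_eta, cmp_assoc, h1, cmp_idl. reflexivity. }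
    unfold hopf_module_map. reassoc. rewrite_chain E1. rewrite_chain E2.
    rewrite_chain_rev (mmap_cmp _ B _ _ _ (idm X ⊗m mmap B (act A)) (idm X ⊗m act A)).
    rewrite interchange. rewrite act_mu, <- (cmp_idl (idm X)), <- interchange,
      mmap_cmp, !cmp_idl. reassoc.
    rewrite_chain E3. merge_tensors. rewrite mu_eta_l, cmp_idl, tensm_id, cmp_idr. rewrite_chain E4.
    rewrite <- mmap_cmp, interchange, act_eta, cmp_idl, tensm_id, mmap_id. reflexivity.
  - unfold hopf_module_map. reassoc.
    rewrite_chain (T2_nat _ B _ _ _ _ (idm X) (act A)). rewrite mmap_id. merge_tensors.
    rewrite cmp_idl, act_mu, <- (cmp_idr (idm (B X))), <- interchange. reassoc.
    rewrite_chain (hopf_module_mapE X (free_alg B (carrier A))). rewrite_chain h2.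
    rewrite !cmp_idr, interchange, act_eta, cmp_idl, tensm_id. reflexivity.
Qed.
End HopfModuleMap.

Lemma hopf_module_map_bmor {C : SMCat} {T P : Bimonad C} (f : BimonadMor T P) (X : C) (A : Alg P) :
  hopf_module_map P X A ∘ f (X ⊗ carrier A)
  = (f X ⊗m idm (carrier A)) ∘ hopf_module_map T X (fstar f A).
Proof.
  unfold hopf_module_map. rewrite <- cmp_assoc, bmor_T2. reassoc. merge_tensors.
  rewrite !cmp_idl, !cmp_idr. reflexivity.
Qed.

Section PresentationTensor.
Context {C : SMCat} {T P : Bimonad C} (f : BimonadMor T P)
  (Ht : tensor_preserves_rc_left C) (HPl : leftHopf P) (HTl : leftHopf T)
  (M : Alg T) (A : Alg P).
Local Notation kap := (hopf_module_map P (carrier M) A).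
Local Notation rho := (hopf_module_map T (carrier M) (fstar f A)).
Local Notation MA := (carrier M ⊗ carrier A).

(* Through the Hopf module maps, the presentation pair of [M ⊗ f^* A] is
   isomorphic to the presentation pair of [M] tensored with [A]; the latter
   is coequalized by [cm ⊗ A] because [- ⊗ A] preserves reflexive coequalizers. *)
Lemma presentation_tensor_iso_l {Z Q1 : C} (cm : hom C (P (carrier M)) Z)
  (Hcm : is_coequalizer (mmap P (act M)) (mu P (carrier M) ∘ mmap P (f (carrier M))) cm)
  (c' : hom C (P MA) Q1)
  (Hc' : is_coequalizer (mmap P ((act M ⊗m idm (carrier A)) ∘ rho)) (mu P MA ∘ mmap P (f MA)) c')
  (chi : hom C Q1 (Z ⊗ carrier A)) (e : chi ∘ c' = (cm ⊗m idm (carrier A)) ∘ kap) :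
  is_iso chi.
Proof.
  destruct (leftHopf_module_iso P HPl (carrier M) A) as [ki [k1 k2]].
  destruct (leftHopf_module_iso P HPl (T (carrier M)) A) as [ki' [_ k2']].
  destruct (leftHopf_module_iso T HTl (carrier M) (fstar f A)) as [ri [_ r2]].
  pose proof (Ht _ _ _ _ _ cm (carrier A) (pres_reflexive f M) Hcm) as Hd.
  assert (Ea : kap ∘ mmap P ((act M ⊗m idm (carrier A)) ∘ rho) ∘ (mmap P ri ∘ ki')
               = mmap P (act M) ⊗m idm (carrier A)).
  { rewrite mmap_cmp. reassoc. rewrite_chain (hopf_module_map_natl P _ _ A (act M)).
    rewrite_chain_rev (mmap_cmp _ P _ _ _ ri rho). rewrite r2, mmap_id, cmp_idr.
    rewrite_chain k2'. rewrite cmp_idr. reflexivity. }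
  assert (Eb : kap ∘ (mu P MA ∘ mmap P (f MA)) ∘ (mmap P ri ∘ ki')
               = (mu P (carrier M) ∘ mmap P (f (carrier M))) ⊗m idm (carrier A)).
  { reassoc. rewrite hopf_module_map_mu.
    rewrite_chain_rev (mmap_cmp _ P _ _ _ (f MA) kap).
    rewrite hopf_module_map_bmor, mmap_cmp. reassoc.
    rewrite_chain (hopf_module_map_natl P _ _ A (f (carrier M))).
    rewrite_chain_rev (mmap_cmp _ P _ _ _ ri rho). rewrite r2, mmap_id, cmp_idr.
    rewrite_chain k2'. rewrite cmp_idr. merge_tensors. rewrite cmp_idl. reflexivity. }
  assert (Ec : cm ⊗m idm (carrier A) ∘ kap ∘ mmap P ((act M ⊗m idm (carrier A)) ∘ rho)
               = cm ⊗m idm (carrier A) ∘ kap ∘ (mu P MA ∘ mmap P (f MA))).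
  { rewrite <- e, <- !cmp_assoc. f_equal. exact (proj1 Hc'). }
  exact (coequalizer_cmp_iso Hc' (coequalizer_transport _ _ _ _ _ _ ki _ Hd k1 k2 Ea Eb Ec) chi e).
Qed.
End PresentationTensor.

(** * The reversed tensor product *)

Lemma castH_inv {O : Type} (H : O -> O -> Type) {A A' B B' : O}
  (e1 : A = A') (e2 : B = B') (x : H A B) (y : H A' B') :
  castH H e1 e2 x = y -> forall e1' e2', castH H e1' e2' y = x.
Proof.
  destruct e1, e2; simpl; intros <- e1' e2'.
  rewrite (proof_irrelevance _ e1' eq_refl), (proof_irrelevance _ e2' eq_refl).
  reflexivity.
Qed.

(* The reversed monoidal category [A ⊗rev B = B ⊗ A] exchanges left and right
   Hopf monads; the right-handed statements are the left-handed ones there. *)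
Definition smcat_rev (C : SMCat) : SMCat.
Proof.
  refine {| smcat := smcat C; tens := fun A B => B ⊗ A;
            tensm := fun A B D E f g => g ⊗m f; unit_ob := 𝟙;
            tens_assoc := fun A B D => eq_sym (tens_assoc D B A);
            tens_unit_l := @tens_unit_r C; tens_unit_r := @tens_unit_l C |}.
  - intros; apply tensm_id.
  - intros; apply tensm_cmp.
  - intros. eapply castH_inv. apply tensm_assoc.
  - intros; apply tensm_unit_r.
  - intros; apply tensm_unit_l.
Defined.

Definition bimonad_rev (C : SMCat) (B : Bimonad C) : Bimonad (smcat_rev C).
Proof.
  refine {| bmon := bmon B : Monad (smcat_rev C); T2 := fun X Y => T2 B Y X; T0 := T0 B |}.
  - intros X X' Y Y' f g; exact (T2_nat _ B Y Y' X X' g f).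
  - intros X Y Z. symmetry. eapply castH_inv. symmetry. apply (T2_coassoc _ B Z Y X).
  - intros X; exact (T0_counit_r _ B X).
  - intros X; exact (T0_counit_l _ B X).
  - intros X Y; apply (mu_T2 _ B Y X).
  - exact (mu_T0 _ B).
  - intros X Y; apply (eta_T2 _ B Y X).
  - exact (eta_T0 _ B).
Defined.

Definition bimonad_mor_rev (C : SMCat) (T P : Bimonad C) (f : BimonadMor T P) :
  BimonadMor (bimonad_rev C T) (bimonad_rev C P).
Proof.
  refine (Build_BimonadMor (smcat_rev C) (bimonad_rev C T) (bimonad_rev C P) (bmor f) _ _ _ _ _).
  - exact (bmor_nat _ _ _ f).
  - exact (bmor_mu _ _ _ f).
  - exact (bmor_eta _ _ _ f).
  - intros X Y; exact (bmor_T2 _ _ _ f Y X).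
  - exact (bmor_T0 _ _ _ f).
Defined.

Lemma alg_tens_actE_r {C : SMCat} (B : Bimonad C) (A N : Alg B) :
  act (alg_tens A N)
  = (idm (carrier A) ⊗m act N) ∘ ((act A ⊗m idm (B (carrier N))) ∘ T2 B (carrier A) (carrier N)).
Proof. exact (alg_tens_actE (bimonad_rev C B) N A). Qed.

Lemma presentation_tensor_iso_r {C : SMCat} {T P : Bimonad C} (f : BimonadMor T P)
  (Ht : tensor_preserves_rc_right C) (HPr : rightHopf P) (HTr : rightHopf T)
  (A : Alg P) (N : Alg T) {Z Q1 : C} (cm : hom C (P (carrier N)) Z)
  (Hcm : is_coequalizer (mmap P (act N)) (mu P (carrier N) ∘ mmap P (f (carrier N))) cm)
  (c' : hom C (P (carrier A ⊗ carrier N)) Q1)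
  (Hc' : is_coequalizer
           (mmap P ((idm (carrier A) ⊗m act N)
                    ∘ (((act A ∘ f (carrier A)) ⊗m idm (T (carrier N))) ∘ T2 T (carrier A) (carrier N))))
           (mu P (carrier A ⊗ carrier N) ∘ mmap P (f (carrier A ⊗ carrier N))) c')
  (chi : hom C Q1 (carrier A ⊗ Z))
  (e : chi ∘ c'
       = (idm (carrier A) ⊗m cm) ∘ ((act A ⊗m idm (P (carrier N))) ∘ T2 P (carrier A) (carrier N))) :
  is_iso chi.
Proof.
  exact (presentation_tensor_iso_l (bimonad_mor_rev C T P f) Ht (fun X Y => HPr Y X)
           (fun X Y => HTr Y X) N A cm Hcm c' Hc' chi e).
Qed.

Lemma hopf_module_map_factor_r {C : SMCat} (B : Bimonad C) (X : C) (A : Alg B) {Z W : C}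
  (c : hom C (B X) Z) (c' : hom C (B (carrier A)) W) (e : hom C W (carrier A)) :
  e ∘ c' = act A ->
  (e ⊗m idm Z) ∘ (c' ⊗m c) ∘ T2 B (carrier A) X
  = (idm (carrier A) ⊗m c) ∘ (act A ⊗m idm (B X)) ∘ T2 B (carrier A) X.
Proof.
  intros E. rewrite <- (cmp_assoc (T2 B (carrier A) X) (act A ⊗m idm (B X))).
  exact (hopf_module_map_factor (bimonad_rev C B) X A c c' e E).
Qed.

(** * The cross quotient is Hopf *)

Section CrossQuotientHopf.
Context {C : SMCat} {T P : Bimonad C} (f : BimonadMor T P)
  (HRC : has_reflexive_coequalizers C) (HP : monad_preserves_rc P)
  (adj : Adjunction (fstar f)).
Local Notation U := (fstar f).
Local Notation F := (ladj adj).
Local Notation counitC := (counitC f adj).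
Local Notation cM := (cM f adj).

Lemma und_cmp {A B D : EM T} (g : hom (EM T) B D) (h : hom (EM T) A B) :
  und (g ∘ h) = und g ∘ und h.
Proof. reflexivity. Qed.

Lemma und_alg_tensm {M M' N N' : EM T} (h : hom (EM T) M M') (k : hom (EM T) N N') :
  und (alg_tensm h k) = und h ⊗m und k.
Proof. reflexivity. Qed.

Lemma alg_tens_act_unitC (X Y : EM T) :
  act (alg_tens (F X) (F Y)) ∘ mmap P (unitC f adj X ⊗m unitC f adj Y)
  = (cM X ⊗m cM Y) ∘ T2 P (carrier X) (carrier Y).
Proof. simpl. rewrite <- cmp_assoc, T2_nat, cmp_assoc, interchange. reflexivity. Qed.

(* The fusion operator of [P ÷_f T] at [(M, N)], precomposed with the quotient
   [cM (M ⊗ U F N)], is [(cM M ⊗ id) ∘ hopf_module_map P M (F N)]. *)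
Lemma cross_quotient_leftHopf (Ht : tensor_preserves_rc_left C)
  (HPl : leftHopf P) (HTl : leftHopf T) : cq_leftHopf adj.
Proof.
  intros M N. apply alg_iso.
  pose proof (cM_coequalizer f HRC HP adj (alg_tens M (U (F N)))) as Hc.
  rewrite alg_tens_actE in Hc.
  apply (presentation_tensor_iso_l f Ht HPl HTl M (F N) (cM M)
           (cM_coequalizer f HRC HP adj M) _ Hc).
  rewrite und_cmp, und_alg_tensm. unfold cq_T2.
  change (cross_quotient adj N) with (U (F N)). change (cross_quotient adj M) with (U (F M)).
  set (K := fstar_str f (F M) (F (U (F N))) ∘ alg_tensm (adj_unit adj M) (adj_unit adj (U (F N)))).
  rewrite !und_cmp.
  change (und (fm U (adj_counit adj (alg_tens (F M) (F (U (F N)))) ∘ fm F K)))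
    with (counitC (alg_tens (F M) (F (U (F N)))) ∘ FC f adj K).
  change (und (idm (U (F M)))) with (idm (carrier (F M))).
  change (und (mu (cross_quotient adj) N)) with (counitC (F N)).
  change (und (fstar_str_inv f (F M) (F (U (F N)))))
    with (idm (carrier (F M) ⊗ carrier (F (U (F N))))).
  rewrite cmp_idl. reassoc.
  rewrite_chain
    (counitC_FC_cM f adj (alg_tens M (U (F N))) (alg_tens (F M) (F (U (F N)))) K).
  change (und K) with (idm _ ∘ (unitC f adj M ⊗m unitC f adj (U (F N)))).
  change (carrier (alg_tens M (U (F N)))) with (carrier M ⊗ carrier (U (F N))).
  rewrite (cmp_idl (unitC f adj M ⊗m unitC f adj (U (F N)))).
  rewrite_chain (alg_tens_act_unitC M (U (F N))).
  apply (hopf_module_map_factor P (carrier M) (F N)), counitC_cM.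
Qed.

Lemma cross_quotient_rightHopf (Ht : tensor_preserves_rc_right C)
  (HPr : rightHopf P) (HTr : rightHopf T) : cq_rightHopf adj.
Proof.
  intros M N. apply alg_iso.
  pose proof (cM_coequalizer f HRC HP adj (alg_tens (U (F M)) N)) as Hc.
  rewrite alg_tens_actE_r in Hc.
  apply (presentation_tensor_iso_r f Ht HPr HTr (F M) N (cM N)
           (cM_coequalizer f HRC HP adj N) _ Hc).
  rewrite und_cmp, und_alg_tensm. unfold cq_T2.
  change (cross_quotient adj N) with (U (F N)). change (cross_quotient adj M) with (U (F M)).
  set (K := fstar_str f (F (U (F M))) (F N) ∘ alg_tensm (adj_unit adj (U (F M))) (adj_unit adj N)).
  rewrite !und_cmp.
  change (und (fm U (adj_counit adj (alg_tens (F (U (F M))) (F N)) ∘ fm F K)))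
    with (counitC (alg_tens (F (U (F M))) (F N)) ∘ FC f adj K).
  change (und (idm (U (F N)))) with (idm (carrier (F N))).
  change (und (mu (cross_quotient adj) M)) with (counitC (F M)).
  change (und (fstar_str_inv f (F (U (F M))) (F N)))
    with (idm (carrier (F (U (F M))) ⊗ carrier (F N))).
  rewrite cmp_idl. reassoc.
  rewrite_chain
    (counitC_FC_cM f adj (alg_tens (U (F M)) N) (alg_tens (F (U (F M))) (F N)) K).
  change (und K) with (idm _ ∘ (unitC f adj (U (F M)) ⊗m unitC f adj N)).
  change (carrier (alg_tens (U (F M)) N)) with (carrier (U (F M)) ⊗ carrier N).
  rewrite (cmp_idl (unitC f adj (U (F M)) ⊗m unitC f adj N)).
  rewrite_chain (alg_tens_act_unitC (U (F M)) N).
  apply (hopf_module_map_factor_r P (carrier N) (F M)), counitC_cM.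
Qed.
End CrossQuotientHopf.

Theorem mainTheorem11 :
  (forall (C : SMCat) (T P : Bimonad C) (f : BimonadMor T P),
     has_reflexive_coequalizers C ->
     tensor_preserves_rc_left C ->
     leftHopf T -> leftHopf P ->
     monad_preserves_rc T -> monad_preserves_rc P ->
     cross_quotientable f /\
     (forall adj : Adjunction (fstar f), cq_leftHopf adj))
  /\
  (forall (C : SMCat) (T P : Bimonad C) (f : BimonadMor T P),
     has_reflexive_coequalizers C ->
     tensor_preserves_rc_right C ->
     rightHopf T -> rightHopf P ->
     monad_preserves_rc T -> monad_preserves_rc P ->
     cross_quotientable f /\
     (forall adj : Adjunction (fstar f), cq_rightHopf adj)).
Proof.
  split; intros C T P f HRC Ht HT HP _ HPrc; split.
  - exact (fstar_monadic f HRC HPrc).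
  - intros adj. exact (cross_quotient_leftHopf f HRC HPrc adj Ht HP HT).
  - exact (fstar_monadic f HRC HPrc).
  - intros adj. exact (cross_quotient_rightHopf f HRC HPrc adj Ht HP HT).
Qed.
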